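(* Let $(X,\Sigma,\mu)$ be a measure space, $n\ge1$, $\mathbb{F}\in\{\mathbb{R},\mathbb{C}\}$, $h\in L^2(X,\mu;\mathbb{F})$, $d\in\mathbb{F}^n$, and define $T:L^2(X,\mu;\mathbb{F}^n)\to\mathbb{F}^n$ by $T(F)=\int_X h(x)f_x\,d\mu(x)$ for $F=(f_x)_{x\in X}$. Suppose $T^{-1}(\{d\})$ contains a continuous frame. Then $\mathcal{F}^{\mathbb{F}}_{(X,\mu),n}\cap T^{-1}(\{d\})$ is dense in $T^{-1}(\{d\})$ (for the norm of $L^2(X,\mu;\mathbb{F}^n)$).
   Context: A family $\Phi=(\varphi_x)_{x\in X}$ in $\mathbb{F}^n$ (with measurable coordinates) is a continuous frame indexed by $(X,\mu)$ if there are $0<A\le B$ with $A\|v\|^2\le\int_X|\langle v,\varphi_x\rangle|^2d\mu(x)\le B\|v\|^2$ for all $v\in\mathbb{F}^n$. $\mathcal{F}^{\mathbb{F}}_{(X,\mu),n}$ denotes the set of such frames, viewed as a subset of $L^2(X,\mu;\mathbb{F}^n)$ (equivalently, the elements of $L^2(X,\mu;\mathbb{F}^n)$ whose coordinate functions are linearly independent in $L^2(X,\mu;\mathbb{F})$). *)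

From HB Require Import structures.
From mathcomp Require Import all_boot all_order all_algebra.
From mathcomp Require Import all_classical all_reals all_analysis.
From mathcomp Require Import complex.

Set Implicit Arguments.
Unset Strict Implicit.
Unset Printing Implicit Defensive.

Import Order.TTheory GRing.Theory Num.Theory.
Local Open Scope classical_set_scope.
Local Open Scope ring_scope.

(* To treat both cases uniformly,
   the definitions are parameterised by the scalar ring F together with its
   real part [re], imaginary part [im] and conjugation [cj] (for F = R:
   re = id, im = 0, cj = id; for F = C: Re, Im, complex conjugation). *)
Section Frames.
Context (R : realType) (dX : measure_display) (X : measurableType dX)
        (mu : {measure set X -> \bar R}).
Context (F : comNzRingType) (re im : F -> R) (cj : F -> F).

Definition sqmod (z : F) : R := re z ^+ 2 + im z ^+ 2.

Definition Fmeasurable (g : X -> F) : Prop :=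
  measurable_fun setT (re \o g) /\ measurable_fun setT (im \o g).

Definition in_L2 (g : X -> F) : Prop :=
  Fmeasurable g /\ (\int[mu]_x (sqmod (g x))%:E < +oo)%E.

Definition inner n (v w : 'rV[F]_n) : F := \sum_(i < n) v ord0 i * cj (w ord0 i).

Definition vnorm2 n (v : 'rV[F]_n) : R := \sum_(i < n) sqmod (v ord0 i).

Definition in_L2vec n (Phi : X -> 'rV[F]_n) : Prop :=
  forall i : 'I_n, in_L2 (fun x => Phi x ord0 i).

Definition L2dist2 n (Phi Psi : X -> 'rV[F]_n) : \bar R :=
  (\int[mu]_x (vnorm2 (Phi x - Psi x))%:E)%E.

Definition is_cont_frame n (Phi : X -> 'rV[F]_n) : Prop :=
  in_L2vec Phi /\
  exists A B : R, 0 < A /\ A <= B /\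
    forall v : 'rV[F]_n,
      ((A * vnorm2 v)%:E <= \int[mu]_x (sqmod (inner v (Phi x)))%:E)%E /\
      (\int[mu]_x (sqmod (inner v (Phi x)))%:E <= (B * vnorm2 v)%:E)%E.

Definition Fintegral_is (g : X -> F) (c : F) : Prop :=
  mu.-integrable setT (EFin \o (re \o g)) /\
  mu.-integrable setT (EFin \o (im \o g)) /\
  (\int[mu]_x (re (g x))%:E = (re c)%:E)%E /\
  (\int[mu]_x (im (g x))%:E = (im c)%:E)%E.

Definition Tmap_is n (h : X -> F) (Phi : X -> 'rV[F]_n) (d : 'rV[F]_n) : Prop :=
  forall i : 'I_n, Fintegral_is (fun x => h x * Phi x ord0 i) (d ord0 i).

Definition cor62_statement n : Prop :=
  forall (h : X -> F) (d : 'rV[F]_n),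
    in_L2 h ->
    (exists Phi0 : X -> 'rV[F]_n, is_cont_frame Phi0 /\ Tmap_is h Phi0 d) ->
    forall Psi : X -> 'rV[F]_n, in_L2vec Psi -> Tmap_is h Psi d ->
    forall eps : R, 0 < eps ->
      exists Phi : X -> 'rV[F]_n,
        is_cont_frame Phi /\ Tmap_is h Phi d /\
        (L2dist2 Phi Psi < (eps ^+ 2)%:E)%E.

End Frames.

Definition reR {R : realType} (x : R) : R := x.
Definition imR {R : realType} (x : R) : R := 0.
Definition cjR {R : realType} (x : R) : R := x.
Definition reC {R : realType} (z : complex.complex R) : R := complex.Re z.
Definition imC {R : realType} (z : complex.complex R) : R := complex.Im z.
Definition cjC {R : realType} (z : complex.complex R) : complex.complex R :=
  complex.conjc z.

From HB Require Import structures.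
From mathcomp Require Import all_boot all_order all_algebra.
From mathcomp Require Import all_classical all_reals all_analysis.
From mathcomp Require Import complex.
From mathcomp Require Import ring lra.
From mathcomp Require Import measurable_realfun.
Set Implicit Arguments.
Unset Strict Implicit.
Unset Printing Implicit Defensive.
Import Order.TTheory GRing.Theory Num.Theory.
Local Open Scope classical_set_scope.
Local Open Scope ring_scope.

(* For Phi in L^2(X, mu; F^n) let G(Phi) be its Gram matrix,
   G(Phi)_{il} = \int conj(phi_i) phi_l.  The key fact is that Phi is a
   continuous frame iff det G(Phi) <> 0.  A null vector u of G(Phi) gives
   \int |<u, Phi>|^2 = 0, which contradicts the lower frame bound; conversely,
   if G(Phi) is invertible the dual family k_j = sum_l (G^-1)_{lj} phi_l
   recovers coordinates, v_j = \int <v, Phi> k_j, and a Cauchy-Schwarz estimate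
   gives the lower frame bound, while the upper (Bessel) bound holds for every
   L^2 family.
   Now let Phi0 be a frame and Psi any element of T^{-1}({d}).  The segment
   Phi_t = Psi + t (Phi0 - Psi) stays in T^{-1}({d}) because T is linear, it
   lies at L^2 distance |t| ||Phi0 - Psi|| from Psi, and det G(Phi_t) is a
   polynomial in t which does not vanish at t = 1, hence not at some
   arbitrarily small t > 0.

   Both scalar fields are treated at once: F is a field with real and
   imaginary parts re, im, a conjugation cj and a constructor mk satisfying
   the algebraic laws shared by R and C. *)

Section ScalarField.
Context (R : realType) (F : fieldType) (re im : F -> R) (cj : F -> F)
        (mk : R -> R -> F).

Hypothesis reD : forall x y, re (x + y) = re x + re y.
Hypothesis imD : forall x y, im (x + y) = im x + im y.
Hypothesis reM : forall x y, re (x * y) = re x * re y - im x * im y.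
Hypothesis imM : forall x y, im (x * y) = re x * im y + im x * re y.
Hypothesis re1 : re 1 = 1.
Hypothesis im1 : im 1 = 0.
Hypothesis re_cj : forall x, re (cj x) = re x.
Hypothesis im_cj : forall x, im (cj x) = - im x.
Hypothesis re_im_inj : forall x y, re x = re y -> im x = im y -> x = y.
(* mk a b has real part a and, unless F has no imaginary part (F = R),
   imaginary part b. *)
Hypothesis re_mk : forall a b, re (mk a b) = a.
Hypothesis im_mk : (forall z, im z = 0) \/ (forall a b, im (mk a b) = b).

Lemma re0 : re 0 = 0.
Proof. by have := reD 0 0; rewrite addr0 => h; lra. Qed.
Lemma im0 : im 0 = 0.
Proof. by have := imD 0 0; rewrite addr0 => h; lra. Qed.

Definition rl (r : R) : F := mk r 0.

Lemma re_rl r : re (rl r) = r. Proof. exact: re_mk. Qed.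
Lemma im_rl r : im (rl r) = 0.
Proof. by case: im_mk => h; rewrite /rl h. Qed.
Lemma rl1 : rl 1 = 1.
Proof. by apply: re_im_inj; rewrite ?re_rl ?im_rl ?re1 ?im1. Qed.

Lemma cjD x y : cj (x + y) = cj x + cj y.
Proof. by apply: re_im_inj; rewrite ?(reD, imD, re_cj, im_cj); ring. Qed.
Lemma cj0 : cj 0 = 0.
Proof. by apply: re_im_inj; rewrite ?re_cj ?im_cj ?re0 ?im0 ?oppr0. Qed.
Lemma cjM x y : cj (x * y) = cj x * cj y.
Proof. by apply: re_im_inj; rewrite ?(reM, imM, re_cj, im_cj); ring. Qed.
Lemma cjK x : cj (cj x) = x.
Proof. by apply: re_im_inj; rewrite ?re_cj ?im_cj ?opprK. Qed.
Lemma cj_rl r : cj (rl r) = rl r.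
Proof. by apply: re_im_inj; rewrite ?re_cj ?im_cj ?im_rl ?oppr0. Qed.
Lemma cj_sum I (s : seq I) (P : pred I) (f : I -> F) :
  cj (\sum_(i <- s | P i) f i) = \sum_(i <- s | P i) cj (f i).
Proof. exact: (big_morph cj cjD cj0). Qed.

Local Notation sqm := (sqmod re im).

Lemma sqmE z : sqm z = re (z * cj z).
Proof. by rewrite /sqmod reM re_cj im_cj; ring. Qed.
Lemma sqm_ge0 z : 0 <= sqm z.
Proof. by rewrite /sqmod addr_ge0 // sqr_ge0. Qed.
Lemma sqmM x y : sqm (x * y) = sqm x * sqm y.
Proof. by rewrite /sqmod reM imM; ring. Qed.
Lemma sqm_cj x : sqm (cj x) = sqm x.
Proof. by rewrite /sqmod re_cj im_cj sqrrN. Qed.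
Lemma sqm_rl r : sqm (rl r) = r ^+ 2.
Proof. by rewrite /sqmod re_rl im_rl expr0n addr0. Qed.
Lemma sqm0 : sqm 0 = 0.
Proof. by rewrite /sqmod re0 im0 expr0n addr0. Qed.
Lemma sqm_eq0 z : sqm z = 0 -> z = 0.
Proof.
rewrite /sqmod => h; have r2 := sqr_ge0 (re z); have i2 := sqr_ge0 (im z).
have re2 : re z ^+ 2 = 0 by lra.
have im2 : im z ^+ 2 = 0 by lra.
by apply: re_im_inj; rewrite ?re0 ?im0; apply/eqP; rewrite -sqrf_eq0; apply/eqP.
Qed.

Lemma sqmD_le x y : sqm (x + y) <= 2 * sqm x + 2 * sqm y.
Proof.
rewrite /sqmod reD imD.
by have := sqr_ge0 (re x - re y); have := sqr_ge0 (im x - im y); nra.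
Qed.

Lemma sqm_sum_le I (s : seq I) (z : I -> F) :
  sqm (\sum_(i <- s) z i) <= 2 ^+ size s * \sum_(i <- s) sqm (z i).
Proof.
elim: s => [|i s ih]; first by rewrite !big_nil sqm0 expr0 mul1r.
rewrite !big_cons /= exprS.
have h := sqmD_le (z i) (\sum_(j <- s) z j).
have h0 := sqm_ge0 (z i).
have h1 : 1 <= 2 ^+ size s :> R by apply: exprn_ege1; rewrite ler1n.
have hS : 0 <= \sum_(j <- s) sqm (z j) by apply: sumr_ge0 => j _; exact: sqm_ge0.
nra.
Qed.

Lemma re_mul_le s x y : 0 < s -> 2 * re (x * y) <= s * sqm x + s^-1 * sqm y.
Proof.
move=> s0; rewrite /sqmod reM.
have si : s * s^-1 = 1 by rewrite mulfV // gt_eqF.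
have si0 : 0 < s^-1 by rewrite invr_gt0.
set t := s^-1 in si si0 *.
have h1 := mulr_ge0 (ltW si0) (sqr_ge0 (s * re x - re y)).
have h2 := mulr_ge0 (ltW si0) (sqr_ge0 (s * im x + im y)).
have e1 : t * (s * re x - re y) ^+ 2 =
  (s * t) * (s * re x ^+ 2) - 2 * (s * t) * (re x * re y) + t * re y ^+ 2 by ring.
have e2 : t * (s * im x + im y) ^+ 2 =
  (s * t) * (s * im x ^+ 2) + 2 * (s * t) * (im x * im y) + t * im y ^+ 2 by ring.
rewrite si !mul1r in e1 e2.
lra.
Qed.

Lemma re_im_mul_le x y :
  `|re (x * y)| <= sqm x + sqm y /\ `|im (x * y)| <= sqm x + sqm y.
Proof.
rewrite reM imM /sqmod !ler_norml.
set a := re x; set b := im x; set c := re y; set e := im y.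
have := sqr_ge0 (a + c); have := sqr_ge0 (a - c); have := sqr_ge0 (b + e).
have := sqr_ge0 (b - e); have := sqr_ge0 (a + e); have := sqr_ge0 (a - e).
have := sqr_ge0 (b + c); have := sqr_ge0 (b - c).
by split; apply/andP; split; nra.
Qed.

Lemma exists_nonroot (p : {poly F}) (t0 : R) : p != 0 -> 0 < t0 ->
  exists2 t, 0 < t <= t0 & ~~ root p (rl t).
Proof.
move=> p0 t00; have [//|none] := pselect (exists2 t, 0 < t <= t0 & ~~ root p (rl t)).
have roots_all t : 0 < t <= t0 -> root p (rl t).
  by move=> ht; apply/negPn/negP => nr; apply: none; exists t.
pose rs := [seq rl (t0 / k.+1%:R) | k <- iota 0 (size p)].
have hroots : all (root p) rs.
  apply/allP => _ /mapP [k _ ->]; apply: roots_all.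
  rewrite divr_gt0 ?ltr0Sn //= ler_pdivrMr ?ltr0Sn //.
  by rewrite ler_peMr ?(ltW t00) // ler1n.
have uniq_rs : uniq rs.
  rewrite map_inj_uniq ?iota_uniq // => k1 k2 /(congr1 re); rewrite !re_rl.
  move/(mulfI (lt0r_neq0 t00))/invr_inj/eqP; rewrite eqr_nat eqSS => /eqP //.
by have := max_poly_roots p0 hroots uniq_rs; rewrite size_map size_iota ltnn.
Qed.

Section Integration.
Context (dX : measure_display) (X : measurableType dX)
        (mu : {measure set X -> \bar R}).

Local Notation rint f := (mu.-integrable setT (EFin \o f)).
Local Notation mfun f := (measurable_fun setT f).
Local Notation RI f := (Rintegral mu setT f).
Implicit Types (f g : X -> R).

Lemma RI_ext f g : (forall x, f x = g x) -> RI f = RI g.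
Proof. by move=> e; congr Rintegral; apply: funext. Qed.

Lemma rintD f g : rint f -> rint g -> rint (fun x => f x + g x).
Proof. by move=> hf hg; apply: eq_integrable (integrableD _ hf hg) => // x _. Qed.
Lemma rintZ k f : rint f -> rint (fun x => k * f x).
Proof. by move=> hf; apply: eq_integrable (integrableZl _ k hf) => // x _. Qed.
Lemma rintB f g : rint f -> rint g -> rint (fun x => f x - g x).
Proof. by move=> hf hg; apply: eq_integrable (integrableB _ hf hg) => // x _. Qed.
Lemma rint0 : rint (fun _ => 0).
Proof. by apply: eq_integrable (integrable0 _ _) => // x _. Qed.

Lemma rint_dominated f g :
  mfun f -> rint g -> (forall x, `|f x| <= g x) -> rint f.
Proof.
move=> mf hg hfg; apply: (le_integrable _ _ _ hg) => //; first exact/measurable_EFinP.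
by move=> x _ /=; rewrite lee_fin (le_trans (hfg x)) // ler_norm.
Qed.

Lemma rint_nonneg f : mfun f -> (forall x, 0 <= f x) ->
  (\int[mu]_x (f x)%:E < +oo)%E -> rint f.
Proof.
move=> mf f0 hf; apply/integrableP; split; first exact/measurable_EFinP.
rewrite (eq_integral (fun x => (f x)%:E)) // => x _.
by rewrite /= ger0_norm ?f0.
Qed.

Lemma RI_EFin f : rint f -> (\int[mu]_x (f x)%:E)%E = (RI f)%:E.
Proof. by move=> hf; rewrite /Rintegral fineK // integrable_fin_num. Qed.

Definition Fintegrable (u : X -> F) : Prop :=
  rint (fun x => re (u x)) /\ rint (fun x => im (u x)).
Definition Fint (u : X -> F) : F :=
  mk (RI (fun x => re (u x))) (RI (fun x => im (u x))).

Lemma re_Fint u : re (Fint u) = RI (fun x => re (u x)).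
Proof. exact: re_mk. Qed.
Lemma im_Fint u : im (Fint u) = RI (fun x => im (u x)).
Proof.
case: im_mk => [im_0|->] //.
by rewrite im_0 (RI_ext (g := fun _ => 0)) // Rintegral_cst // mul0r.
Qed.
Lemma Fint_ext u w : (forall x, u x = w x) -> Fint u = Fint w.
Proof. by move=> e; congr Fint; apply: funext. Qed.

Lemma Fintegral_isP u c : Fintegral_is mu re im u c <-> Fintegrable u /\ Fint u = c.
Proof.
split=> [[hre [him [ere eim]]]|[[hre him] <-]].
  split=> //; apply: re_im_inj; rewrite ?re_Fint ?im_Fint /Rintegral.
    by rewrite ere.
  by rewrite eim.
by split=> //; split=> //; rewrite re_Fint im_Fint !RI_EFin.
Qed.

Lemma FintegrableD u w : Fintegrable u -> Fintegrable w ->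
  Fintegrable (fun x => u x + w x).
Proof.
move=> [ur ui] [wr wi]; split.
  by apply: eq_integrable (rintD ur wr) => // x _ /=; rewrite reD.
by apply: eq_integrable (rintD ui wi) => // x _ /=; rewrite imD.
Qed.
Lemma FintD u w : Fintegrable u -> Fintegrable w ->
  Fint (fun x => u x + w x) = Fint u + Fint w.
Proof.
move=> [ur ui] [wr wi]; apply: re_im_inj.
  rewrite reD !re_Fint -(RintegralD measurableT ur wr).
  by apply: RI_ext => x; rewrite reD.
rewrite imD !im_Fint -(RintegralD measurableT ui wi).
by apply: RI_ext => x; rewrite imD.
Qed.
Lemma FintegrableZ c u : Fintegrable u -> Fintegrable (fun x => c * u x).
Proof.
move=> [ur ui]; split.
  apply: eq_integrable (rintB (rintZ (re c) ur) (rintZ (im c) ui)) => // x _ /=.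
  by rewrite reM.
apply: eq_integrable (rintD (rintZ (re c) ui) (rintZ (im c) ur)) => // x _ /=.
by rewrite imM.
Qed.
Lemma FintZ c u : Fintegrable u -> Fint (fun x => c * u x) = c * Fint u.
Proof.
move=> [ur ui]; apply: re_im_inj.
  rewrite reM re_Fint im_Fint re_Fint -!RintegralZl //.
  rewrite -(RintegralB measurableT (rintZ _ ur) (rintZ _ ui)).
  by apply: RI_ext => x; rewrite reM.
rewrite imM im_Fint re_Fint im_Fint -!RintegralZl //.
rewrite -(RintegralD measurableT (rintZ _ ui) (rintZ _ ur)).
by apply: RI_ext => x; rewrite imM.
Qed.

Lemma Fintegral_is_lin u w a b c :
  Fintegral_is mu re im u a -> Fintegral_is mu re im w b ->
  Fintegral_is mu re im (fun x => u x + c * w x) (a + c * b).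
Proof.
move=> /Fintegral_isP [iu <-] /Fintegral_isP [iw <-]; apply/Fintegral_isP.
have iZ := FintegrableZ c iw.
by split; [exact: FintegrableD | rewrite FintD // FintZ].
Qed.

Lemma Fint0 : Fint (fun _ => 0) = 0.
Proof.
by apply: re_im_inj; rewrite ?re_Fint ?im_Fint ?re0 ?im0 Rintegral_cst ?mul0r.
Qed.

Lemma Fintegrable_sum I (s : seq I) (u : I -> X -> F) :
  (forall i, Fintegrable (u i)) -> Fintegrable (fun x => \sum_(i <- s) u i x).
Proof.
move=> hu; elim: s => [|i s ih].
  by split; apply: eq_integrable rint0 => // x _; rewrite /= big_nil ?re0 ?im0.
under [fun x => _]funext do rewrite big_cons.
exact: FintegrableD.
Qed.
Lemma Fint_sum I (s : seq I) (u : I -> X -> F) :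
  (forall i, Fintegrable (u i)) ->
  Fint (fun x => \sum_(i <- s) u i x) = \sum_(i <- s) Fint (u i).
Proof.
move=> hu; elim: s => [|i s ih].
  by rewrite big_nil -[RHS]Fint0; apply: Fint_ext => x; rewrite big_nil.
rewrite big_cons -ih -FintD //; last exact: Fintegrable_sum.
by apply: Fint_ext => x; rewrite big_cons.
Qed.

Local Notation Fm := (@Fmeasurable R dX X F re im).
Local Notation L2 := (in_L2 mu re im).

Lemma FmD u w : Fm u -> Fm w -> Fm (fun x => u x + w x).
Proof.
move=> [ur ui] [wr wi]; split.
  by apply: eq_measurable_fun (measurable_funD ur wr) => x _ /=; rewrite reD.
by apply: eq_measurable_fun (measurable_funD ui wi) => x _ /=; rewrite imD.
Qed.
Lemma FmM u w : Fm u -> Fm w -> Fm (fun x => u x * w x).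
Proof.
move=> [ur ui] [wr wi]; split.
  apply: eq_measurable_fun (measurable_funB (measurable_funM ur wr)
    (measurable_funM ui wi)) => x _ /=.
  by rewrite reM.
apply: eq_measurable_fun (measurable_funD (measurable_funM ur wi)
  (measurable_funM ui wr)) => x _ /=.
by rewrite imM.
Qed.
Lemma FmZ c u : Fm u -> Fm (fun x => c * u x).
Proof.
by move=> hu; apply: FmM hu; split; exact: measurable_cst.
Qed.
Lemma Fm_cj u : Fm u -> Fm (fun x => cj (u x)).
Proof.
move=> [ur ui]; split.
  by apply: eq_measurable_fun ur => x _ /=; rewrite re_cj.
apply: eq_measurable_fun (measurable_funM (measurable_cst (-1 : R)) ui) => x _ /=.
by rewrite im_cj mulN1r.
Qed.
Lemma Fm_sqm u : Fm u -> mfun (fun x => sqm (u x)).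
Proof. by move=> [ur ui]; apply: measurable_funD; apply: measurable_funX. Qed.

Lemma L2_rint u : L2 u -> rint (fun x => sqm (u x)).
Proof. by move=> [mu_ fin]; apply: rint_nonneg (Fm_sqm mu_) _ fin => x; exact: sqm_ge0. Qed.
Lemma L2_of u : Fm u -> rint (fun x => sqm (u x)) -> L2 u.
Proof. by move=> mu_ hu; split => //; rewrite RI_EFin // ltry. Qed.
Lemma L2_EFin u :
  L2 u -> (\int[mu]_x (sqm (u x))%:E)%E = (RI (fun x => sqm (u x)))%:E.
Proof. by move=> hu; rewrite RI_EFin //; exact: L2_rint. Qed.

Lemma L2D u w : L2 u -> L2 w -> L2 (fun x => u x + w x).
Proof.
move=> [mu_ fu] [mw fw]; have muw := FmD mu_ mw; apply: L2_of => //.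
apply: (rint_dominated (g := fun x => 2 * sqm (u x) + 2 * sqm (w x))).
- exact: Fm_sqm.
- by apply: rintD; apply: rintZ; apply: L2_rint.
- by move=> x; rewrite ger0_norm ?sqm_ge0 // sqmD_le.
Qed.
Lemma L2Z c u : L2 u -> L2 (fun x => c * u x).
Proof.
move=> hu; apply: L2_of; first by apply: FmZ; case: hu.
by apply: eq_integrable (rintZ (sqm c) (L2_rint hu)) => // x _ /=; rewrite sqmM.
Qed.
Lemma L2_cj u : L2 u -> L2 (fun x => cj (u x)).
Proof.
move=> hu; apply: L2_of; first by apply: Fm_cj; case: hu.
by apply: eq_integrable (L2_rint hu) => // x _ /=; rewrite sqm_cj.
Qed.
Lemma L2_ext u w : (forall x, u x = w x) -> L2 u -> L2 w.
Proof. by move=> e; rewrite (_ : u = w) //; apply: funext. Qed.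
Lemma L2B u w : L2 u -> L2 w -> L2 (fun x => u x - w x).
Proof. by move=> hu hw; apply: L2_ext (L2D hu (L2Z (-1) hw)) => x; rewrite mulN1r. Qed.
Lemma L2_sum I (s : seq I) (u : I -> X -> F) :
  (forall i, L2 (u i)) -> L2 (fun x => \sum_(i <- s) u i x).
Proof.
move=> hu; elim: s => [|i s ih].
  apply: L2_ext (_ : L2 (fun _ => 0)) => [x|]; first by rewrite big_nil.
  apply: L2_of; first by split; exact: measurable_cst.
  by apply: eq_integrable rint0 => // x _; rewrite /= sqm0.
by apply: L2_ext (L2D (hu i) ih) => x; rewrite big_cons.
Qed.

Lemma L2M u w : L2 u -> L2 w -> Fintegrable (fun x => u x * w x).
Proof.
move=> hu hw; have [mr mi] := FmM hu.1 hw.1.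
have hg : rint (fun x => sqm (u x) + sqm (w x)) by apply: rintD; apply: L2_rint.
by split; [apply: (rint_dominated mr hg) | apply: (rint_dominated mi hg)] => x;
  case: (re_im_mul_le (u x) (w x)).
Qed.

Lemma sqm_Fint_le a b : L2 a -> L2 b ->
  sqm (Fint (fun x => a x * b x)) <=
  (RI (fun x => sqm (b x)) + 1) * RI (fun x => sqm (a x)).
Proof.
move=> ha hb; set z := Fint _.
set Kb := RI (fun x => sqm (b x)); set Ka := RI (fun x => sqm (a x)).
have ra := L2_rint ha; have rb := L2_rint hb.
have Kb0 : 0 <= Kb by apply: Rintegral_ge0 => x _; exact: sqm_ge0.
set s := Kb + 1; have s0 : 0 < s by rewrite ltr_wpDl.
have cb : L2 (fun x => cj z * b x) by exact: L2Z.
have rab : rint (fun x => re (a x * (cj z * b x))) by case: (L2M ha cb).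
have e_z : sqm z = RI (fun x => re (a x * (cj z * b x))).
  rewrite sqmE mulrC /z -FintZ; last exact: L2M.
  by rewrite re_Fint; apply: RI_ext => x; rewrite mulrCA.
have young : 2 * sqm z <= s * Ka + s^-1 * (sqm z * Kb).
  have : RI (fun x => 2 * re (a x * (cj z * b x))) <=
         RI (fun x => s * sqm (a x) + s^-1 * (sqm z * sqm (b x))).
    apply: le_Rintegral => //; first exact: rintZ.
      by apply: rintD; apply: rintZ => //; exact: rintZ.
    by move=> x _; rewrite -(sqm_cj z) -sqmM; exact: re_mul_le.
  rewrite RintegralZl // -e_z.
  rewrite (RintegralD measurableT (rintZ s ra) (rintZ _ (rintZ _ rb))).
  by rewrite !RintegralZl //; exact: rintZ.
have shrink : s^-1 * (sqm z * Kb) <= sqm z.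
  by rewrite mulrC ler_pdivrMr // /s; have := sqm_ge0 z; nra.
by have := sqm_ge0 z; nra.
Qed.

Section Families.
Context (n : nat).
Local Notation Vn := 'rV[F]_n.
Local Notation vn2 := (@vnorm2 R F re im n).
Local Notation inn := (@inner F cj n).
Local Notation L2v := (@in_L2vec R dX X mu F re im n).
Implicit Types (Phi Psi : X -> Vn) (v w : Vn).

Lemma vn2_ge0 v : 0 <= vn2 v.
Proof. by apply: sumr_ge0 => j _; exact: sqm_ge0. Qed.
Lemma sqm_le_vn2 v i : sqm (v ord0 i) <= vn2 v.
Proof.
rewrite /vnorm2 (bigD1 i) //= lerDl.
by apply: sumr_ge0 => j _; exact: sqm_ge0.
Qed.
Lemma vn2_eq0 v : vn2 v = 0 -> v = 0.
Proof.
move=> v0; apply/matrixP => i j; rewrite ord1 mxE; apply: sqm_eq0.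
by apply/eqP; rewrite eq_le sqm_ge0 andbT -v0 sqm_le_vn2.
Qed.

Lemma sqm_inner_le v w :
  sqm (inn v w) <= 2 ^+ size (index_enum 'I_n) * vn2 v * vn2 w.
Proof.
apply: le_trans (sqm_sum_le _ _) _.
rewrite -mulrA ler_wpM2l ?exprn_ge0 // /vnorm2 mulr_sumr; apply: ler_sum => i _.
by rewrite sqmM sqm_cj ler_wpM2r ?sqm_ge0 ?sqm_le_vn2.
Qed.

Lemma inner_L2 Phi v : L2v Phi -> L2 (fun x => inn v (Phi x)).
Proof. by move=> hPhi; apply: L2_sum => i; apply: L2Z; apply: L2_cj. Qed.

Definition energy Phi v : R := RI (fun x => sqm (inn v (Phi x))).

Lemma energy_ge0 Phi v : 0 <= energy Phi v.
Proof. by apply: Rintegral_ge0 => x _; exact: sqm_ge0. Qed.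
Lemma energy_EFin Phi v : L2v Phi ->
  (\int[mu]_x (sqm (inn v (Phi x)))%:E)%E = (energy Phi v)%:E.
Proof. by move=> hPhi; rewrite L2_EFin //; exact: inner_L2. Qed.

Definition gram2 Phi Psi : 'M[F]_n :=
  \matrix_(i, l) Fint (fun x => cj (Phi x ord0 i) * Psi x ord0 l).
Definition gram Phi : 'M[F]_n := gram2 Phi Phi.

Lemma Fint_bilinear (g k : 'I_n -> X -> F) (a b : 'I_n -> F) :
  (forall i, L2 (g i)) -> (forall l, L2 (k l)) ->
  Fint (fun x => (\sum_i a i * g i x) * (\sum_l b l * k l x)) =
  \sum_i \sum_l a i * b l * Fint (fun x => g i x * k l x).
Proof.
move=> hg hk; have gk i l := L2M (hg i) (hk l).
rewrite (Fint_ext (w := fun x => \sum_i \sum_l a i * b l * (g i x * k l x))).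
  rewrite Fint_sum => [|i]; last by apply: Fintegrable_sum => l; exact: FintegrableZ.
  apply: eq_bigr => i _; rewrite Fint_sum => [|l]; last exact: FintegrableZ.
  by apply: eq_bigr => l _; rewrite FintZ.
move=> x; rewrite mulr_suml; apply: eq_bigr => i _; rewrite mulr_sumr.
by apply: eq_bigr => l _; rewrite mulrACA.
Qed.

Lemma energy_gram Phi u : L2v Phi ->
  energy Phi u = re (\sum_l (u *m gram Phi) ord0 l * cj (u ord0 l)).
Proof.
move=> hPhi; rewrite /energy (RI_ext (g := fun x =>
  re ((\sum_i u ord0 i * cj (Phi x ord0 i)) *
      (\sum_l cj (u ord0 l) * Phi x ord0 l)))); last first.
  move=> x; rewrite sqmE cj_sum; congr (re (_ * _)).
  by apply: eq_bigr => l _; rewrite cjM cjK.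
rewrite -re_Fint Fint_bilinear => [|i|l]; [|exact: L2_cj|exact: hPhi].
congr re; rewrite exchange_big; apply: eq_bigr => l _.
rewrite !mxE mulr_suml; apply: eq_bigr => i _; rewrite !mxE; ring.
Qed.

(* A continuous frame has an invertible Gram matrix: a null vector u would
   have zero energy, contradicting the lower frame bound. *)
Lemma frame_gram_det Phi : is_cont_frame mu re im cj Phi -> \det (gram Phi) != 0.
Proof.
move=> [hPhi [A [B [A0 [_ bounds]]]]]; apply/negP => /det0P [u u0 Gu].
have [lower _] := bounds u.
move: lower; rewrite energy_EFin // energy_gram // Gu big1 => [|l _]; last first.
  by rewrite mxE mul0r.
rewrite re0 lee_fin pmulr_rle0 // => vu0.
by move/eqP: u0; apply; apply: vn2_eq0; apply/eqP; rewrite eq_le vu0 vn2_ge0.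
Qed.

Definition dual Phi (j : 'I_n) (x : X) : F :=
  \sum_l invmx (gram Phi) l j * Phi x ord0 l.

Lemma dual_L2 Phi j : L2v Phi -> L2 (dual Phi j).
Proof. by move=> hPhi; apply: L2_sum => l; apply: L2Z. Qed.

Lemma dual_coord Phi v j : L2v Phi -> \det (gram Phi) != 0 ->
  Fint (fun x => inn v (Phi x) * dual Phi j x) = v ord0 j.
Proof.
move=> hPhi G0; have Gu : gram Phi \in unitmx by rewrite unitmxE unitfE.
rewrite Fint_bilinear => [|i|l]; [|exact: L2_cj|exact: hPhi].
have -> : v ord0 j = (v *m gram Phi *m invmx (gram Phi)) ord0 j.
  by rewrite -mulmxA mulmxV // mulmx1.
rewrite mxE exchange_big; apply: eq_bigr => l _.
rewrite mxE mulr_suml; apply: eq_bigr => i _; rewrite mxE; ring.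
Qed.

(* An invertible Gram matrix gives a lower frame bound: each coordinate v_j
   is recovered from <v, Phi> by the dual family. *)
Lemma lower_frame_bound Phi : L2v Phi -> \det (gram Phi) != 0 ->
  exists A, 0 < A /\ forall v, A * vn2 v <= energy Phi v.
Proof.
move=> hPhi G0; pose K j := RI (fun x => sqm (dual Phi j x)).
pose S := \sum_j (K j + 1).
have S0 : 0 <= S.
  by apply: sumr_ge0 => j _; rewrite addr_ge0 //; apply: Rintegral_ge0 => x _;
    exact: sqm_ge0.
have coord v j : sqm (v ord0 j) <= (K j + 1) * energy Phi v.
  rewrite -(dual_coord v j hPhi G0).
  exact: sqm_Fint_le (inner_L2 v hPhi) (dual_L2 j hPhi).
have total v : vn2 v <= S * energy Phi v.
  by rewrite /vnorm2 /S mulr_suml; apply: ler_sum => j _; exact: coord.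
exists (1 + S)^-1; split=> [|v]; first by rewrite invr_gt0 ltr_wpDr.
rewrite mulrC ler_pdivrMr ?ltr_wpDr //.
by have := total v; have := energy_ge0 Phi v; nra.
Qed.

Lemma rint_vn2 Phi : L2v Phi -> rint (fun x => vn2 (Phi x)).
Proof.
move=> hPhi.
apply: eq_integrable (@integrable_sum _ _ _ mu _ measurableT _ (index_enum 'I_n)
  xpredT (fun i x => (sqm (Phi x ord0 i))%:E) (fun i _ => L2_rint (hPhi i)))
  => // x _.
by rewrite /= /vnorm2 sumEFin.
Qed.

Lemma bessel_bound Phi : L2v Phi ->
  exists B, 0 <= B /\ forall v, energy Phi v <= B * vn2 v.
Proof.
move=> hPhi; pose c : R := 2 ^+ size (index_enum 'I_n).
have rPhi := rint_vn2 hPhi.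
pose C := RI (fun x => vn2 (Phi x)).
have C0 : 0 <= C by apply: Rintegral_ge0 => x _; exact: vn2_ge0.
exists (c * C); split=> [|v]; first by rewrite mulr_ge0 ?exprn_ge0.
apply: (@le_trans _ _ (RI (fun x => c * vn2 v * vn2 (Phi x)))).
  apply: le_Rintegral => //; first exact: L2_rint (inner_L2 v hPhi).
    exact: rintZ.
  by move=> x _; exact: sqm_inner_le.
by rewrite RintegralZl // mulrAC.
Qed.

Lemma frame_of_gram Phi : L2v Phi -> \det (gram Phi) != 0 ->
  is_cont_frame mu re im cj Phi.
Proof.
move=> hPhi G0; have [A [A0 lower]] := lower_frame_bound hPhi G0.
have [B [B0 upper]] := bessel_bound hPhi.
split=> //; exists A, (A + B); split=> //; split=> [|v]; first by rewrite lerDl.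
rewrite energy_EFin // !lee_fin; split=> //.
by apply: le_trans (upper v) _; rewrite ler_wpM2r ?vn2_ge0 // lerDr ltW.
Qed.

Lemma Tmap_lin h Phi Psi a b c :
  Tmap_is mu re im h Phi a -> Tmap_is mu re im h Psi b ->
  Tmap_is mu re im h (fun x => Phi x + c *: Psi x) (a + c *: b).
Proof.
move=> TPhi TPsi i; rewrite !mxE.
have -> : (fun x => h x * (Phi x + c *: Psi x) ord0 i) =
          (fun x => h x * Phi x ord0 i + c * (h x * Psi x ord0 i)).
  by apply: funext => x; rewrite !mxE; ring.
exact: Fintegral_is_lin.
Qed.

Definition segment Psi E (t : R) (x : X) : Vn := Psi x + rl t *: E x.

Lemma segment_L2 Psi E t : L2v Psi -> L2v E -> L2v (segment Psi E t).
Proof.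
move=> hPsi hE i; apply: L2_ext (L2D (hPsi i) (L2Z (rl t) (hE i))) => x.
by rewrite !mxE.
Qed.

Lemma segment_dist Psi E t : L2v E ->
  L2dist2 mu re im (segment Psi E t) Psi = (t ^+ 2 * RI (fun x => vn2 (E x)))%:E.
Proof.
move=> hE; rewrite -RintegralZl ?rint_vn2 // -RI_EFin; last first.
  by apply: rintZ; exact: rint_vn2.
apply: eq_integral => x _; rewrite /segment addrC addKr /vnorm2 mulr_sumr.
by congr EFin; apply: eq_bigr => i _; rewrite mxE sqmM sqm_rl.
Qed.

Definition gram_poly Psi E : 'M[{poly F}]_n :=
  \matrix_(i, l) ((gram Psi i l)%:P + (gram2 Psi E i l + gram2 E Psi i l)%:P * 'X
                  + (gram E i l)%:P * 'X^2).

Lemma gram_segment Psi E t : L2v Psi -> L2v E ->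
  gram (segment Psi E t) = map_mx (horner_eval (rl t)) (gram_poly Psi E).
Proof.
move=> hPsi hE; apply/matrixP => i l; rewrite !mxE horner_evalE !hornerE.
have PP := L2M (L2_cj (hPsi i)) (hPsi l); have PE := L2M (L2_cj (hPsi i)) (hE l).
have EP := L2M (L2_cj (hE i)) (hPsi l); have EE := L2M (L2_cj (hE i)) (hE l).
rewrite (Fint_ext (w := fun x => cj (Psi x ord0 i) * Psi x ord0 l +
  rl t * (cj (Psi x ord0 i) * E x ord0 l + cj (E x ord0 i) * Psi x ord0 l) +
  rl t ^+ 2 * (cj (E x ord0 i) * E x ord0 l))); last first.
  by move=> x; rewrite !mxE cjD cjM cj_rl; ring.
rewrite !FintD //; try by do ?[apply: FintegrableD | apply: FintegrableZ].
by rewrite !FintZ ?FintD //=; [ring | exact: FintegrableD].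
Qed.

Lemma small_step (C eps t : R) : 0 <= C -> 0 < eps ->
  0 < t <= eps / (C + 1) -> t ^+ 2 * C < eps ^+ 2.
Proof.
move=> C0 eps0 /andP [t0 t_le].
have C1 : 0 < C + 1 by rewrite ltr_wpDl.
have tC : t * (C + 1) <= eps by rewrite -ler_pdivlMr.
have sq : (t * (C + 1)) ^+ 2 <= eps ^+ 2.
  by rewrite ler_pXn2r // ?nnegrE ?mulr_ge0 ?ltW.
have lt : t ^+ 2 * C < (t * (C + 1)) ^+ 2.
  by rewrite exprMn ltr_pM2l ?exprn_gt0 //; nra.
exact: lt_le_trans lt sq.
Qed.

Theorem frames_dense_in_fibre : cor62_statement mu re im cj n.
Proof.
move=> h d _ [Phi0 [fr0 TPhi0]] Psi hPsi TPsi eps eps0.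
have hPhi0 := fr0.1.
pose E x := Phi0 x + (-1) *: Psi x.
have hE : L2v E.
  by move=> i; apply: L2_ext (L2B (hPhi0 i) (hPsi i)) => x; rewrite !mxE mulN1r.
have TE : Tmap_is mu re im h E 0 by rewrite -(subrr d) -scaleN1r; exact: Tmap_lin.
have Tseg t : Tmap_is mu re im h (segment Psi E t) d.
  by rewrite -[d]addr0 -(scaler0 _ (rl t)); exact: Tmap_lin.
have seg1 : segment Psi E 1 = Phi0.
  by apply: funext => x; rewrite /segment /E rl1 scale1r scaleN1r addrC subrK.
have det_poly : \det (gram_poly Psi E) != 0.
  have := frame_gram_det fr0; rewrite -seg1 gram_segment // det_map_mx.
  by apply: contra => /eqP ->; rewrite rmorph0.
pose C := RI (fun x => vn2 (E x)).
have C0 : 0 <= C by apply: Rintegral_ge0 => x _; exact: vn2_ge0.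
have t0_gt0 : 0 < eps / (C + 1) by rewrite divr_gt0 // ltr_wpDl.
have [t t_small nonroot] := exists_nonroot det_poly t0_gt0.
exists (segment Psi E t); split; last split => //.
  apply: frame_of_gram; first exact: segment_L2.
  by rewrite gram_segment // det_map_mx.
by rewrite segment_dist // lte_fin; exact: small_step.
Qed.

End Families.
End Integration.
End ScalarField.

Lemma cor62_real (R : realType) (dX : measure_display) (X : measurableType dX)
  (mu : {measure set X -> \bar R}) (n : nat) :
  cor62_statement mu (@reR R) (@imR R) (@cjR R) n.
Proof.
apply: (@frames_dense_in_fibre R R reR imR cjR (fun a _ => a));
  rewrite /reR /imR /cjR //=; [by move=> *; ring.. | by left].
Qed.

Lemma cor62_complex (R : realType) (dX : measure_display) (X : measurableType dX)
  (mu : {measure set X -> \bar R}) (n : nat) :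
  cor62_statement mu (@reC R) (@imC R) (@cjC R) n.
Proof.
apply: (@frames_dense_in_fibre R _ reC imC cjC (fun a b => complex.Complex a b)).
all: rewrite /reC /imC /cjC //=; try by right.
(* the remaining laws hold by computation on pairs of reals *)
all: by do ?case=> ? ? /=; move=> * //; subst.
Qed.

Local Open Scope ereal_scope.

Theorem corollary6p2 (R : realType) (dX : measure_display)
  (X : measurableType dX) (mu : {measure set X -> \bar R}) (n : nat) :
  (1 <= n)%N ->
  cor62_statement mu (@reR R) (@imR R) (@cjR R) n /\
  cor62_statement mu (@reC R) (@imC R) (@cjC R) n.
Proof. by move=> _; split; [exact: cor62_real | exact: cor62_complex]. Qed.
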